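(* Let $f:\mathbb{R}^d\to\mathbb{R}$ be convex and $L$-smooth (differentiable with $\|\nabla f(x)-\nabla f(y)\|\le L\|x-y\|$), and let $x_*$ be a minimizer of $f$. Consider the iterate-averaging form of Nesterov's method: $z_0=x_0\in\mathbb{R}^d$ and for $k\ge 0$ $$y_k=(1-c_{k+1})x_k+c_{k+1}z_k,\qquad z_{k+1}=z_k-\rho_k\nabla f(y_k),\qquad x_{k+1}=(1-c_{k+1})x_k+c_{k+1}z_{k+1},$$ with $c_{k+1}=\frac{2}{k+2}$ and $\rho_k=\frac{k+1}{2L}$. Then for every $n\ge 1$, $$f(x_n)-f(x_* )\le\frac{2L}{n^{\overline{2}}}\|x_0-x_*\|^2,$$ where $n^{\overline 2}=n(n+1)$. *)

From HB Require Import structures.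
From mathcomp Require Import all_boot all_order all_algebra.
From mathcomp Require Import all_classical all_reals all_analysis.
Set Implicit Arguments. Unset Strict Implicit. Unset Printing Implicit Defensive.
Import Order.TTheory GRing.Theory Num.Theory.
Import numFieldNormedType.Exports.
Local Open Scope ring_scope.

(* Euclidean inner product and norm on R^d (the library's norm on 'rV is the sup norm). *)
Definition dotv {R : realType} {d : nat} (u v : 'rV[R]_d) : R :=
  \sum_(i < d) u ord0 i * v ord0 i.
Definition enorm {R : realType} {d : nat} (v : 'rV[R]_d) : R := Num.sqrt (dotv v v).

(* Gradient: the row of partial derivatives (directional derivatives along the
   standard basis vectors); for a differentiable f this is the gradient. *)
Definition grad {R : realType} {d : nat} (f : 'rV[R]_d -> R) (x : 'rV[R]_d) : 'rV[R]_d :=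
  \row_(i < d) ('D_(delta_mx ord0 i) f x).

Definition convex_fun {R : realType} {d : nat} (f : 'rV[R]_d -> R) : Prop :=
  forall (x y : 'rV[R]_d) (t : R), 0 <= t -> t <= 1 ->
    f ((1 - t) *: x + t *: y) <= (1 - t) * f x + t * f y.

Definition L_smooth {R : realType} {d : nat} (L : R) (f : 'rV[R]_d -> R) : Prop :=
  (forall x, differentiable f x) /\
  (forall x y, enorm (grad f x - grad f y) <= L * enorm (x - y)).

Definition c_coef {R : realType} (k : nat) : R := 2 / (k%:R + 2).      (* c_{k+1} *)
Definition rho {R : realType} (L : R) (k : nat) : R := (k%:R + 1) / (2 * L).

Fixpoint nesterov {R : realType} {d : nat} (f : 'rV[R]_d -> R) (L : R)
    (x0 : 'rV[R]_d) (k : nat) : 'rV[R]_d * 'rV[R]_d :=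
  match k with
  | 0%N => (x0, x0)
  | k'.+1 =>
      let: (x, z) := nesterov f L x0 k' in
      let c := c_coef k' in
      let y := (1 - c) *: x + c *: z in
      let z' := z - rho L k' *: grad f y in
      ((1 - c) *: x + c *: z', z')
  end.

From HB Require Import structures.
From mathcomp Require Import all_boot all_order all_algebra.
From mathcomp Require Import all_classical all_reals all_analysis.
From mathcomp Require Import ring lra.
Import Order.TTheory GRing.Theory Num.Theory.
Import numFieldNormedType.Exports.
Local Open Scope ring_scope.

(* With A_k = k(k+1)/(4L), the potential
     Phi_k = A_k (f x_k - f xs) + |z_k - xs|^2 / 2
   does not increase along the method.  Writing c = c_{k+1} and S = A_{k+1},
   one has rho_k = c S, A_k = (1 - c) S and L c^2 S <= 1; one step then
   combines the descent lemma for the L-smooth f at y_k with the two gradient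
   inequalities of the convex f at y_k (towards x_k and towards xs).  Hence
   A_n (f x_n - f xs) <= Phi_0 = |x_0 - xs|^2 / 2. *)

Section EuclideanInnerProduct.
Context {R : realType} {d : nat}.
Implicit Types (a : R) (u v w : 'rV[R]_d).

Lemma dotvC u v : dotv u v = dotv v u.
Proof. by apply: eq_bigr => i _; rewrite mulrC. Qed.

Lemma dotvDl u v w : dotv (u + v) w = dotv u w + dotv v w.
Proof. by rewrite /dotv -big_split; apply: eq_bigr => i _; rewrite mxE mulrDl. Qed.

Lemma dotvBl u v w : dotv (u - v) w = dotv u w - dotv v w.
Proof. by rewrite /dotv -sumrB; apply: eq_bigr => i _; rewrite !mxE mulrBl. Qed.

Lemma dotvZl a u w : dotv (a *: u) w = a * dotv u w.
Proof. by rewrite /dotv mulr_sumr; apply: eq_bigr => i _; rewrite mxE mulrA. Qed.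

Lemma dotvDr u v w : dotv w (u + v) = dotv w u + dotv w v.
Proof. by rewrite dotvC dotvDl !(dotvC w). Qed.

Lemma dotvBr u v w : dotv w (u - v) = dotv w u - dotv w v.
Proof. by rewrite dotvC dotvBl !(dotvC w). Qed.

Lemma dotvZr a u w : dotv w (a *: u) = a * dotv w u.
Proof. by rewrite dotvC dotvZl dotvC. Qed.

Lemma dotv_ge0 u : 0 <= dotv u u.
Proof. by apply: sumr_ge0 => i _; rewrite -expr2 sqr_ge0. Qed.

Lemma enorm_ge0 u : 0 <= enorm u.
Proof. exact: sqrtr_ge0. Qed.

Lemma sqr_enorm u : enorm u ^+ 2 = dotv u u.
Proof. by rewrite sqr_sqrtr // dotv_ge0. Qed.

Lemma enormZ a u : enorm (a *: u) = `|a| * enorm u.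
Proof. by rewrite /enorm dotvZl dotvZr mulrA -expr2 sqrtrM ?sqr_ge0 // sqrtr_sqr. Qed.

Lemma dotv_self_eq0 u w : dotv u u = 0 -> dotv u w = 0.
Proof.
move=> /eqP; rewrite psumr_eq0 => [/allP u0|i _]; last by rewrite -expr2 sqr_ge0.
apply: big1 => i _; have := u0 i (mem_index_enum i).
by rewrite mulf_eq0 orbb => /eqP ->; rewrite mul0r.
Qed.

Lemma CauchySchwarz_dotv u w : dotv u w <= enorm u * enorm w.
Proof.
have [u0|u_neq0] := eqVneq (dotv u u) 0.
  by rewrite dotv_self_eq0 // mulr_ge0 ?enorm_ge0.
have [w0|w_neq0] := eqVneq (dotv w w) 0.
  by rewrite dotvC dotv_self_eq0 // mulr_ge0 ?enorm_ge0.
have u_gt0 : 0 < enorm u by rewrite sqrtr_gt0 lt_def u_neq0 dotv_ge0.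
have w_gt0 : 0 < enorm w by rewrite sqrtr_gt0 lt_def w_neq0 dotv_ge0.
(* |(|w| u - |u| w)|^2 = 2 |u| |w| (|u| |w| - <u, w>) *)
have := dotv_ge0 (enorm w *: u - enorm u *: w).
rewrite !(dotvBl, dotvBr, dotvZl, dotvZr) -!sqr_enorm (dotvC w u) => expansion_ge0.
have : 0 <= enorm u * enorm w * (2 * (enorm u * enorm w - dotv u w)) by lra.
by rewrite pmulr_rge0 ?mulr_gt0 // pmulr_rge0 // subr_ge0.
Qed.

End EuclideanInnerProduct.

Section SmoothConvexFunctions.
Context {R : realType} {d : nat} {f : 'rV[R]_d -> R}.
Local Open Scope classical_set_scope.
Implicit Types (x y w : 'rV[R]_d).

Lemma grad_dotv x w : differentiable f x -> dotv (grad f x) w = 'D_w f x.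
Proof.
move=> df; rewrite deriveE // {2}(matrix_sum_delta w) big_ord1 linear_sum.
apply: eq_bigr => i _; rewrite mxE deriveE // linearZ /= mulrC.
by rewrite [ord0]ord1.
Qed.

Lemma is_derive_along_line x w (t : R) : differentiable f (x + t *: w) ->
  is_derive t 1 (fun s : R => f (x + s *: w)) ('D_w f (x + t *: w)).
Proof.
move=> df.
have quotientE : (fun h : R => h^-1 *: (f (x + (h *: 1 + t) *: w) - f (x + t *: w)))
               = (fun h : R => h^-1 *: (f (h *: w + (x + t *: w)) - f (x + t *: w))).
  by apply/funext => h; rewrite [_%:A]mulr1 scalerDl addrCA addrC.
apply: DeriveDef; first by rewrite /derivable quotientE; exact: diff_derivable.
by rewrite /derive quotientE.
Qed.

Lemma smooth_descent {L : R} x w : L_smooth L f ->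
  f (x + w) <= f x + dotv (grad f x) w + L / 2 * dotv w w.
Proof.
move=> [dif lip]; set D0 := dotv (grad f x) w; set c := L / 2 * dotv w w.
(* psi is f on the segment minus its quadratic model; the Lipschitz gradient
   makes its slope <= 0, so the MVT gives psi 1 <= psi 0. *)
pose psi t := f (x + t *: w) - (D0 * t + c * t ^+ 2).
have dpsi (t : R) : is_derive t (1 : R) psi ('D_w f (x + t *: w) - (D0 + 2 * c * t)).
  apply: is_deriveB; first exact: is_derive_along_line.
  by apply: is_derive_eq; rewrite ![_%:A]mulr1 -[c *: _]/(c * _); ring.
have psi_cont : {within `[0, 1], continuous psi}.
  apply: derivable_within_continuous => t _.
  exact: (@ex_derive _ _ _ _ _ _ _ (dpsi t)).
have [t /[!in_itv]/= /andP[t_gt0 _] ] := MVT ltr01 (fun t _ => dpsi t) psi_cont.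
rewrite /psi scale1r scale0r addr0 -grad_dotv // mulr1 expr0n expr1n /= => mvt.
have : dotv (grad f (x + t *: w) - grad f x) w <= 2 * c * t.
  apply: le_trans (CauchySchwarz_dotv _ _) _.
  apply: le_trans (ler_wpM2r (enorm_ge0 _) (lip _ _)) _.
  rewrite addrC addKr enormZ gtr0_norm // /c -sqr_enorm.
  lra.
rewrite dotvBl -/D0; lra.
Qed.

Lemma convex_grad_le x y : convex_fun f -> differentiable f x ->
  f x + dotv (grad f x) (y - x) <= f y.
Proof.
move=> cvx_f df; rewrite grad_dotv //.
suff : 'D_(y - x) f x <= f y - f x by lra.
have slope_cvg := cvg_dnbhs_at_right (@diff_derivable _ _ _ _ _ (y - x) df).
apply: (cvgr_to_le slope_cvg); near=> h.
have h_gt0 : 0 < h by near: h; exact: nbhs_right_gt.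
have h_le1 : h <= 1 by near: h; exact: nbhs_right_le.
rewrite /= -[h^-1 *: _]/(h^-1 * _) ler_pdivrMl //.
have := cvx_f x y h (ltW h_gt0) h_le1.
have -> : (1 - h) *: x + h *: y = h *: (y - x) + x.
  by rewrite scalerBl scale1r scalerBr addrAC [in RHS]addrAC [x + _]addrC.
lra.
Unshelve. all: by end_near.
Qed.

End SmoothConvexFunctions.

Section PotentialStep.
Context {R : realType} {d : nat}.
Variables (f : 'rV[R]_d -> R) (L : R) (xs : 'rV[R]_d).
Hypotheses (cvx_f : convex_fun f) (smooth_f : L_smooth L f).

Definition potential (A : R) (x z : 'rV[R]_d) : R :=
  A * (f x - f xs) + dotv (z - xs) (z - xs) / 2.

Lemma potential_step (c S : R) (x z : 'rV[R]_d) :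
  0 <= c <= 1 -> 0 <= S -> L * c ^+ 2 * S <= 1 ->
  let y := (1 - c) *: x + c *: z in
  let z' := z - (c * S) *: grad f y in
  (potential S ((1 - c) *: x + c *: z') z' <= potential ((1 - c) * S) x z : Prop).
Proof.
move=> /andP[c_ge0 c_le1] S_ge0 LcS_le1 y z'.
have [dif _] := smooth_f; set g := grad f y.
have x'E : (1 - c) *: x + c *: z' = y + (- (c ^+ 2 * S)) *: g.
  by apply/rowP => i; rewrite !mxE; ring.
have descent := smooth_descent y (- (c ^+ 2 * S) *: g) smooth_f.
rewrite -x'E !(dotvZl, dotvZr) -/g in descent.
have grad_x := convex_grad_le y x cvx_f (dif y).
have grad_xs := convex_grad_le y xs cvx_f (dif y).
have gyE : dotv g y = (1 - c) * dotv g x + c * dotv g z by rewrite dotvDr !dotvZr.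
rewrite -/g !dotvBr gyE in grad_x grad_xs.
have dist_z'E : dotv (z' - xs) (z' - xs) = dotv (z - xs) (z - xs)
    - 2 * (c * S) * (dotv g z - dotv g xs) + (c * S) ^+ 2 * dotv g g.
  have -> : z' - xs = (z - xs) - (c * S) *: g by rewrite addrAC.
  by rewrite !(dotvBl, dotvBr, dotvZl, dotvZr) !(dotvC _ g); ring.
rewrite /potential dist_z'E.
(* The sum of these four inequalities is the claim: the terms in <g, z - xs>
   cancel and (c S)^2 |g|^2 (1 - L c^2 S) / 2 is left over. *)
have := ler_wpM2l S_ge0 descent.
have c'_ge0 : 0 <= 1 - c by rewrite subr_ge0.
have := ler_wpM2l (mulr_ge0 c'_ge0 S_ge0) grad_x.
have := ler_wpM2l (mulr_ge0 c_ge0 S_ge0) grad_xs.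
have : 0 <= (c * S) ^+ 2 * dotv g g * (1 - L * c ^+ 2 * S).
  by rewrite mulr_ge0 ?subr_ge0 // mulr_ge0 ?sqr_ge0 ?dotv_ge0.
lra.
Qed.

End PotentialStep.

Section NesterovSchedule.
Context {R : realType}.
Variable L : R.
Hypothesis L_gt0 : 0 < L.
Implicit Types k n : nat.

Definition nesterov_weight n : R := n%:R * (n%:R + 1) / (4 * L).

Lemma nesterov_weight_ge0 n : 0 <= nesterov_weight n.
Proof. by rewrite /nesterov_weight divr_ge0 ?mulr_ge0 ?addr_ge0 // ltW. Qed.

Lemma nesterov_weight_gt0 n : (0 < n)%N -> 0 < nesterov_weight n.
Proof. by move=> n_gt0; rewrite /nesterov_weight divr_gt0 ?mulr_gt0 ?ltr0n // ltr_wpDl. Qed.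

Let natr2_gt0 k : 0 < k%:R + 2 :> R. Proof. by rewrite ltr_wpDl. Qed.

Lemma c_coef_ge0_le1 k : 0 <= (c_coef k : R) <= 1.
Proof. by rewrite /c_coef divr_ge0 ?(ltW (natr2_gt0 k)) //= ler_pdivrMr // mul1r lerDr. Qed.

Lemma rho_weight k : rho L k = c_coef k * nesterov_weight k.+1.
Proof.
rewrite /rho /c_coef /nesterov_weight -addn1 natrD; field.
by rewrite (gt_eqF L_gt0) (gt_eqF (natr2_gt0 k)).
Qed.

Lemma weight_c_coef k : nesterov_weight k = (1 - c_coef k) * nesterov_weight k.+1.
Proof.
rewrite /c_coef /nesterov_weight -addn1 natrD; field.
by rewrite (gt_eqF L_gt0) (gt_eqF (natr2_gt0 k)).
Qed.

Lemma c_coef_weight_le1 k : L * c_coef k ^+ 2 * nesterov_weight k.+1 <= 1.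
Proof.
have -> : L * c_coef k ^+ 2 * nesterov_weight k.+1 = (k%:R + 1) / (k%:R + 2).
  rewrite /c_coef /nesterov_weight -addn1 natrD; field.
  by rewrite (gt_eqF L_gt0) (gt_eqF (natr2_gt0 k)).
by rewrite ler_pdivrMr // mul1r lerD2l ler1n.
Qed.

End NesterovSchedule.

Lemma nesterov_potential_le {R : realType} {d : nat} {f : 'rV[R]_d -> R} {L : R}
    (x0 xs : 'rV[R]_d) (k : nat) :
  0 < L -> convex_fun f -> L_smooth L f ->
  potential f xs (nesterov_weight L k) (nesterov f L x0 k).1 (nesterov f L x0 k).2
    <= dotv (x0 - xs) (x0 - xs) / 2.
Proof.
move=> L_gt0 cvx_f smooth_f.
elim: k => [|k IH]; first by rewrite /potential /nesterov_weight /= !mul0r add0r.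
move: IH => /=; case: (nesterov f L x0 k) => x z /=.
rewrite weight_c_coef // rho_weight //; apply: le_trans.
apply: (potential_step _ _ _ cvx_f smooth_f).
- exact: c_coef_ge0_le1.
- exact: nesterov_weight_ge0.
- exact: c_coef_weight_le1.
Qed.

Theorem theorem5 (R : realType) (d : nat) (f : 'rV[R]_d -> R) (L : R)
  (x0 xs : 'rV[R]_d) :
  0 < L -> convex_fun f -> L_smooth L f ->
  (forall x, f xs <= f x) ->
  forall n : nat, (1 <= n)%N ->
    f (nesterov f L x0 n).1 - f xs <= 2 * L / (n%:R * (n%:R + 1)) * enorm (x0 - xs) ^+ 2.
Proof.
move=> L_gt0 cvx_f smooth_f _ n n_gt0.
have := nesterov_potential_le x0 xs n L_gt0 cvx_f smooth_f.
rewrite /potential; set x := (nesterov f L x0 n).1; set z := (nesterov f L x0 n).2.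
move=> potential_le; have dist_ge0 := dotv_ge0 (z - xs).
have w_gt0 : 0 < nesterov_weight L n by exact: nesterov_weight_gt0.
have -> : 2 * L / (n%:R * (n%:R + 1)) * enorm (x0 - xs) ^+ 2
          = enorm (x0 - xs) ^+ 2 / 2 / nesterov_weight L n.
  by rewrite /nesterov_weight; field; rewrite !lt0r_neq0 ?ltr0n ?ltr_wpDl.
rewrite ler_pdivlMr // sqr_enorm; lra.
Qed.
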